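(* For all $0<|t|<\pi/2$, \[ \frac{\pi^2+\frac{28-8\pi}{\pi}t^2+\frac{16\pi-48}{\pi^3}t^4}{\pi^2-4t^2}<\sec t<\frac{\pi^2-\frac{8-\pi^2}{2}t^2-\frac{4\pi^3-128}{2\pi^3}t^4}{\pi^2-4t^2}. \] *)

From Stdlib Require Import Reals Lra.
Open Scope R_scope.

Definition sec (t : R) : R := / cos t.

From Stdlib Require Import Reals Lra.
Open Scope R_scope.

(* For x <= 1
   squeeze cos x between its Taylor polynomials of degrees 6 and 8; for x > 1
   write cos x = sin y with y = π/2 - x < 5/8 and use the Taylor polynomials of
   sin of degrees 7 and 9.  The resulting polynomial inequalities are tight at
   x = 0 (resp. y = 0); once that zero is divided out, what is left is the sign
   of a polynomial in x^2 (resp. y) and π, which is checked on a few boxes by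
   bounding every monomial, π being replaced by the enclosure [3.1415, 3.1416]. *)

Lemma PI_enclosure : 31415/10000 <= PI <= 31416/10000.
Proof.
  destruct (PI_2_3_7_ineq 4) as [Hlo Hhi].
  unfold tg_alt, PI_2_3_7_tg, Ratan_seq in Hlo, Hhi; simpl in Hlo, Hhi.
  lra.
Qed.

(* Turns [INR (fact n)] into a binary numeral; [simpl] would build a unary one. *)
Ltac compute_factorials :=
  rewrite ?INR_IZR_INZ;
  repeat match goal with |- context [Z.of_nat ?n] =>
    let z := eval vm_compute in (Z.of_nat n) in change (Z.of_nat n) with z
  end.

Definition cos_lower (x : R) : R := 1 - x^2/2 + x^4/24 - x^6/720.
Definition cos_upper (x : R) : R := cos_lower x + x^8/40320.
Definition sin_lower (y : R) : R := y - y^3/6 + y^5/120 - y^7/5040.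
Definition sin_upper (y : R) : R := sin_lower y + y^9/362880.

Lemma cos_taylor_bounds x :
  - PI / 2 <= x <= PI / 2 -> cos_lower x <= cos x <= cos_upper x.
Proof.
  intros Hx; destruct (cos_bound x 1) as [Hlo Hhi]; try lra.
  revert Hlo Hhi; cbv [cos_approx cos_term sum_f_R0 Nat.mul Nat.add].
  compute_factorials; unfold cos_upper, cos_lower; lra.
Qed.

Lemma sin_taylor_bounds y : 0 <= y <= PI -> sin_lower y <= sin y <= sin_upper y.
Proof.
  intros Hy; destruct (sin_bound y 1) as [Hlo Hhi]; try lra.
  revert Hlo Hhi; cbv [sin_approx sin_term sum_f_R0 Nat.mul Nat.add].
  compute_factorials; unfold sin_upper, sin_lower; lra.
Qed.

Lemma monomial_bounds r e h E i j :
  0 <= r <= h -> 0 <= e <= E -> 0 <= r ^ i * e ^ j <= h ^ i * E ^ j.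
Proof.
  intros [Hr Hrh] [He HeE]; split.
  - apply Rmult_le_pos; apply pow_le; lra.
  - apply Rmult_le_compat; try (apply pow_le; lra); apply pow_incr; lra.
Qed.

Ltac pose_monomial_bounds Hr He i j :=
  lazymatch i with
  | O => pose_monomial_row Hr He O j
  | S ?k => pose_monomial_row Hr He i j; pose_monomial_bounds Hr He k j
  end
with pose_monomial_row Hr He i j :=
  lazymatch j with
  | O => pose proof (monomial_bounds _ _ _ _ i O Hr He)
  | S ?k => pose proof (monomial_bounds _ _ _ _ i j Hr He); pose_monomial_row Hr He i k
  end.

(* Sign of a polynomial in y and p (degrees at most dy, dp) on the box
   a <= N y <= a + h, b <= D p <= b + E.  The shifts y = (a + r) / N and
   p = (b + e) / D are kept integral on purpose: lra's certificate checker
   never reduces fractions, so expanding powers of a rationally shifted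
   variable makes the kernel check blow up. *)
Ltac sign_on_box y N a h dy p D b E dp :=
  let Hr := fresh "Hr" in let He := fresh "He" in
  assert (Hr : 0 <= N * y - a <= h) by lra;
  assert (He : 0 <= D * p - b <= E) by lra;
  replace y with ((a + (N * y - a)) / N) by field;
  replace p with ((b + (D * p - b)) / D) by field;
  revert Hr He; generalize (N * y - a) (D * p - b); intros ? ? Hr He;
  unfold Rdiv; rewrite ?Rpow_mult_distr;
  pose_monomial_bounds Hr He dy dp; lra.

Ltac sign_on_pi_box y N a h dy p dp := sign_on_box y N a h dy p 10000 31415 1 dp.

Section PiEnclosure.

Variable p : R.
Hypothesis Hp : 31415/10000 <= p <= 31416/10000.

Definition sec_lower_num (x : R) : R := p^5 + (28 - 8 * p) * p^2 * x^2 + (16 * p - 48) * x^4.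
Definition sec_upper_num (x : R) : R := 2 * p^5 - (8 - p^2) * p^3 * x^2 - (4 * p^3 - 128) * x^4.

Lemma sec_lower_num_pos x : 0 < sec_lower_num x.
Proof.
  unfold sec_lower_num.
  assert (0 < p^5) by (apply pow_lt; lra).
  assert (0 <= (28 - 8 * p) * p^2 * x^2)
    by (apply Rmult_le_pos; [apply Rmult_le_pos; [lra | apply pow2_ge_0] | apply pow2_ge_0]).
  assert (0 <= x^4) by (replace (x^4) with ((x^2)^2) by ring; apply pow2_ge_0).
  assert (0 <= (16 * p - 48) * x^4) by (apply Rmult_le_pos; lra).
  lra.
Qed.

Lemma sec_upper_num_pos x : 0 < sec_upper_num x.
Proof.
  unfold sec_upper_num.
  assert (0 < p^5) by (apply pow_lt; lra).
  assert (0 <= (p^2 - 8) * p^3 * x^2)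
    by (apply Rmult_le_pos; [apply Rmult_le_pos; [nra | apply pow_le; lra] | apply pow2_ge_0]).
  assert (p^3 <= 32) by (simpl; nra).
  assert (0 <= x^4) by (replace (x^4) with ((x^2)^2) by ring; apply pow2_ge_0).
  assert (0 <= (128 - 4 * p^3) * x^4) by (apply Rmult_le_pos; lra).
  lra.
Qed.

(* The quotients of the four gaps by their zero at x = 0 (in u = x^2) or
   y = 0; the factorisations are the [Hfactor] steps below. *)
Definition lower_residual_near0 (u : R) : R :=
  (28 * p^2 - 4 * p^3 - 1/2 * p^5)
  + (-48 + 16 * p - 14 * p^2 + 4 * p^3 + 1/24 * p^5) * u
  + (24 - 8 * p + 7/6 * p^2 - 1/3 * p^3 - 1/720 * p^5) * u^2
  + (-2 + 2/3 * p - 7/180 * p^2 + 1/90 * p^3 + 1/40320 * p^5) * u^3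
  + (1/15 - 1/45 * p + 1/1440 * p^2 - 1/5040 * p^3) * u^4
  + (-1/840 + 1/2520 * p) * u^5.

Definition upper_residual_near0 (u : R) : R :=
  (128 - 5/12 * p^5)
  + (-64 + 5/3 * p^3 + 7/180 * p^5) * u
  + (16/3 - 7/45 * p^3 - 1/720 * p^5) * u^2
  + (-8/45 + 1/180 * p^3) * u^3.

Definition lower_residual_near_half_pi (y : R) : R :=
  (-44 * p^2 + 16 * p^3 - 2/3 * p^4)
  + (96 * p - 32 * p^2 + 2/3 * p^3) * y
  + (-48 + 16 * p + 22/3 * p^2 - 8/3 * p^3 + 1/30 * p^4) * y^2
  + (-16 * p + 16/3 * p^2 - 1/30 * p^3) * y^3
  + (8 - 8/3 * p - 11/30 * p^2 + 2/15 * p^3 - 1/1260 * p^4) * y^4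
  + (4/5 * p - 4/15 * p^2 + 1/1260 * p^3) * y^5
  + (-2/5 + 2/15 * p + 11/1260 * p^2 - 1/315 * p^3 + 1/90720 * p^4) * y^6
  + (-2/105 * p + 2/315 * p^2 - 1/90720 * p^3) * y^7
  + (1/105 - 1/315 * p - 11/90720 * p^2 + 1/22680 * p^3) * y^8
  + (1/3780 * p - 1/11340 * p^2) * y^9
  + (-1/7560 + 1/22680 * p) * y^10.

Definition upper_residual_near_half_pi (y : R) : R :=
  (-56 * p^3 + 8 * p^4 + p^6)
  + (192 * p^2 - 8 * p^3 - 4/3 * p^4 - 5 * p^5) * y
  + (-256 * p + 32/3 * p^3 + 20/3 * p^4 - 1/6 * p^6) * y^2
  + (128 - 32 * p^2 - 8/3 * p^3 + 1/15 * p^4 + 5/6 * p^5) * y^3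
  + (128/3 * p - 8/15 * p^3 - 19/15 * p^4 + 1/120 * p^6) * y^4
  + (-64/3 + 8/5 * p^2 + 3/5 * p^3 - 1/630 * p^4 - 1/24 * p^5) * y^5
  + (-32/15 * p + 4/315 * p^3 + 41/630 * p^4 - 1/5040 * p^6) * y^6
  + (16/15 - 4/105 * p^2 - 2/63 * p^3 + 1/1008 * p^5) * y^7
  + (16/315 * p - 1/630 * p^4) * y^8
  + (-8/315 + 1/1260 * p^3) * y^9.

Lemma lower_residual_near0_neg u :
  0 <= u <= 1 -> lower_residual_near0 u < 0.
Proof.
  intros Hu; unfold lower_residual_near0.
  destruct (Rle_lt_dec u (1/2)).
  - sign_on_pi_box u 2 0 1 5%nat p 5%nat.
  - sign_on_pi_box u 2 1 1 5%nat p 5%nat.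
Qed.

Lemma upper_residual_near0_pos u :
  0 <= u <= 1 -> 0 < upper_residual_near0 u.
Proof.
  intros Hu; unfold upper_residual_near0.
  sign_on_pi_box u 1 0 1 3%nat p 5%nat.
Qed.

Lemma lower_residual_near_half_pi_neg y :
  0 <= y <= 5/8 -> lower_residual_near_half_pi y < 0.
Proof.
  intros Hy; unfold lower_residual_near_half_pi.
  destruct (Rle_lt_dec y (5/16)).
  - sign_on_pi_box y 16 0 5 10%nat p 4%nat.
  - sign_on_pi_box y 16 5 5 10%nat p 4%nat.
Qed.

Lemma upper_residual_near_half_pi_pos y :
  0 <= y <= 5/8 -> 0 < upper_residual_near_half_pi y.
Proof.
  intros Hy; unfold upper_residual_near_half_pi.
  destruct (Rle_lt_dec y (5/32)).
  { sign_on_pi_box y 128 0 20 9%nat p 6%nat. }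
  destruct (Rle_lt_dec y (25/64)).
  { sign_on_pi_box y 128 20 30 9%nat p 6%nat. }
  destruct (Rle_lt_dec y (65/128)).
  - sign_on_pi_box y 128 50 15 9%nat p 6%nat.
  - sign_on_pi_box y 128 65 15 9%nat p 6%nat.
Qed.

Lemma lower_bound_near0 x : 0 < x <= 1 ->
  cos_upper x * sec_lower_num x < p^3 * (p^2 - 4 * x^2).
Proof.
  intros Hx.
  assert (Hfactor : cos_upper x * sec_lower_num x - p^3 * (p^2 - 4 * x^2)
                    = x^2 * lower_residual_near0 (x^2))
    by (unfold cos_upper, cos_lower, sec_lower_num, lower_residual_near0; field).
  assert (0 < x^2 * - lower_residual_near0 (x^2)).
  { apply Rmult_lt_0_compat; [nra |].
    enough (lower_residual_near0 (x^2) < 0) by lra.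
    apply lower_residual_near0_neg; nra. }
  lra.
Qed.

Lemma upper_bound_near0 x : 0 < x <= 1 ->
  2 * p^3 * (p^2 - 4 * x^2) < cos_lower x * sec_upper_num x.
Proof.
  intros Hx.
  assert (Hfactor : cos_lower x * sec_upper_num x - 2 * p^3 * (p^2 - 4 * x^2)
                    = x^4 * upper_residual_near0 (x^2))
    by (unfold cos_lower, sec_upper_num, upper_residual_near0; field).
  assert (0 < x^4 * upper_residual_near0 (x^2)).
  { apply Rmult_lt_0_compat; [apply pow_lt; lra |].
    apply upper_residual_near0_pos; nra. }
  lra.
Qed.

Lemma lower_bound_near_half_pi y : 0 < y <= 5/8 ->
  sin_upper y * sec_lower_num (p/2 - y) < p^3 * (p^2 - 4 * (p/2 - y)^2).
Proof.
  intros Hy.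
  assert (Hfactor : sin_upper y * sec_lower_num (p/2 - y) - p^3 * (p^2 - 4 * (p/2 - y)^2)
                    = y^3 * lower_residual_near_half_pi y)
    by (unfold sin_upper, sin_lower, sec_lower_num, lower_residual_near_half_pi; field).
  assert (0 < y^3 * - lower_residual_near_half_pi y).
  { apply Rmult_lt_0_compat; [apply pow_lt; lra |].
    enough (lower_residual_near_half_pi y < 0) by lra.
    apply lower_residual_near_half_pi_neg; lra. }
  lra.
Qed.

Lemma upper_bound_near_half_pi y : 0 < y <= 5/8 ->
  2 * p^3 * (p^2 - 4 * (p/2 - y)^2) < sin_lower y * sec_upper_num (p/2 - y).
Proof.
  intros Hy.
  assert (Hfactor : sin_lower y * sec_upper_num (p/2 - y) - 2 * p^3 * (p^2 - 4 * (p/2 - y)^2)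
                    = y^2 * upper_residual_near_half_pi y)
    by (unfold sin_lower, sec_upper_num, upper_residual_near_half_pi; field).
  assert (0 < y^2 * upper_residual_near_half_pi y).
  { apply Rmult_lt_0_compat; [apply pow_lt; lra |].
    apply upper_residual_near_half_pi_pos; lra. }
  lra.
Qed.

End PiEnclosure.

Lemma cos_polynomial_bounds x : 0 < x < PI / 2 ->
  cos x * sec_lower_num PI x < PI^3 * (PI^2 - 4 * x^2) /\
  2 * PI^3 * (PI^2 - 4 * x^2) < cos x * sec_upper_num PI x.
Proof.
  intros Hx.
  pose proof PI_enclosure as Hpi.
  pose proof (sec_lower_num_pos PI Hpi x) as Hlo.
  pose proof (sec_upper_num_pos PI Hpi x) as Hhi.
  destruct (Rle_lt_dec x 1) as [Hx1 | Hx1].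
  - pose proof (cos_taylor_bounds x ltac:(lra)) as Hcos.
    pose proof (lower_bound_near0 PI Hpi x ltac:(lra)).
    pose proof (upper_bound_near0 PI Hpi x ltac:(lra)).
    split; nra.
  - replace x with (PI/2 - (PI/2 - x)) by ring; rewrite cos_shift.
    pose proof (sin_taylor_bounds (PI/2 - x) ltac:(lra)) as Hsin.
    pose proof (lower_bound_near_half_pi PI Hpi (PI/2 - x) ltac:(lra)).
    pose proof (upper_bound_near_half_pi PI Hpi (PI/2 - x) ltac:(lra)).
    replace (PI/2 - (PI/2 - x)) with x in * by ring.
    split; nra.
Qed.

Lemma sec_lower_num_scaled p x : p <> 0 ->
  p^2 + (28 - 8 * p) / p * x^2 + (16 * p - 48) / p^3 * x^4 = sec_lower_num p x / p^3.
Proof. intros Hp; unfold sec_lower_num; field; exact Hp. Qed.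

Lemma sec_upper_num_scaled p x : p <> 0 ->
  p^2 - (8 - p^2) / 2 * x^2 - (4 * p^3 - 128) / (2 * p^3) * x^4
  = sec_upper_num p x / (2 * p^3).
Proof. intros Hp; unfold sec_upper_num; field; exact Hp. Qed.

Lemma div_lt_inv a k b c : 0 < k -> 0 < b -> 0 < c -> c * a < k * b -> a / k / b < / c.
Proof.
  intros Hk Hb Hc H.
  apply (Rmult_lt_reg_r (k * b * c)); [apply Rmult_lt_0_compat; [nra | lra] |].
  replace (a / k / b * (k * b * c)) with (c * a) by (field; lra).
  replace (/ c * (k * b * c)) with (k * b) by (field; lra).
  exact H.
Qed.

Lemma inv_lt_div a k b c : 0 < k -> 0 < b -> 0 < c -> k * b < c * a -> / c < a / k / b.
Proof.
  intros Hk Hb Hc H.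
  apply (Rmult_lt_reg_r (k * b * c)); [apply Rmult_lt_0_compat; [nra | lra] |].
  replace (a / k / b * (k * b * c)) with (c * a) by (field; lra).
  replace (/ c * (k * b * c)) with (k * b) by (field; lra).
  exact H.
Qed.

Lemma sec_bounds_pos x : 0 < x < PI / 2 ->
  (PI ^ 2 + (28 - 8 * PI) / PI * x ^ 2 + (16 * PI - 48) / PI ^ 3 * x ^ 4)
    / (PI ^ 2 - 4 * x ^ 2) < sec x /\
  sec x < (PI ^ 2 - (8 - PI ^ 2) / 2 * x ^ 2 - (4 * PI ^ 3 - 128) / (2 * PI ^ 3) * x ^ 4)
    / (PI ^ 2 - 4 * x ^ 2).
Proof.
  intros Hx.
  pose proof PI_enclosure as Hpi.
  assert (Hcos : 0 < cos x) by (apply cos_gt_0; lra).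
  assert (HD : 0 < PI ^ 2 - 4 * x ^ 2) by nra.
  assert (Hpi3 : 0 < PI ^ 3) by (apply pow_lt; lra).
  destruct (cos_polynomial_bounds x Hx) as [Hlo Hhi].
  rewrite sec_lower_num_scaled, sec_upper_num_scaled by lra; unfold sec.
  split; [apply div_lt_inv | apply inv_lt_div]; lra.
Qed.

Theorem mainTheorem17 (t : R) (ht0 : 0 < Rabs t) (ht1 : Rabs t < PI / 2) :
  (PI ^ 2 + (28 - 8 * PI) / PI * t ^ 2 + (16 * PI - 48) / PI ^ 3 * t ^ 4)
    / (PI ^ 2 - 4 * t ^ 2) < sec t /\
  sec t < (PI ^ 2 - (8 - PI ^ 2) / 2 * t ^ 2 - (4 * PI ^ 3 - 128) / (2 * PI ^ 3) * t ^ 4)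
    / (PI ^ 2 - 4 * t ^ 2).
Proof.
  destruct (Rle_or_lt 0 t) as [Ht | Ht].
  - rewrite Rabs_right in ht0, ht1 by lra.
    apply sec_bounds_pos; lra.
  - rewrite Rabs_left in ht0, ht1 by lra.
    replace (t ^ 2) with ((- t) ^ 2) by ring.
    replace (t ^ 4) with ((- t) ^ 4) by ring.
    replace (sec t) with (sec (- t)) by (unfold sec; rewrite cos_neg; reflexivity).
    apply sec_bounds_pos; lra.
Qed.
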